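(* Fix a monomial order on $S=K[x_1,\ldots,x_n]$ and let $J$ and $E$ be ideals of $S$. The following conditions are equivalent: (a) $\mathrm{in}(J+E)=\mathrm{in}(J)+\mathrm{in}(E)$; (b) for any $\mathcal G_J\in \mathrm{Gr}(J)$ and any $\mathcal G_E\in\mathrm{Gr}(E)$, we have $\mathcal G_J\cup\mathcal G_E\in \mathrm{Gr}(J+E)$; (c) there exist $\mathcal G_J\in \mathrm{Gr}(J)$ and $\mathcal G_E\in\mathrm{Gr}(E)$ such that $\mathcal G_J\cup\mathcal G_E\in \mathrm{Gr}(J+E)$; (d) $\mathrm{in}(J\cap E)=\mathrm{in}(J)\cap\mathrm{in}(E)$; (e) for any nonzero $f\in J$ and nonzero $g\in E$ there exists $h\in J\cap E$ with $\mathrm{in}(h)=\mathrm{lcm}(\mathrm{in}(f),\mathrm{in}(g))$; (f) for any $0\neq h\in J+E$ there exist $f\in J$ and $g\in E$ with $h=f-g$ and such that either one of $f,g$ is zero, or both are nonzero and $\mathrm{in}(f)\neq \mathrm{in}(g)$.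
   Context: $K$ is a field and $S=K[x_1,\ldots,x_n]$ with a fixed monomial order. For $0\neq f\in S$, $\mathrm{in}(f)$ denotes its leading monomial and $\mathrm{LT}(f)$ its leading term. For an ideal $I\subseteq S$, $\mathrm{in}(I)$ is the ideal generated by $\{\mathrm{in}(f): 0\ne f\in I\}$, and $\mathrm{Gr}(I)$ denotes the set of all Gröbner bases of $I$ with respect to the fixed monomial order. *)

From HB Require Import structures.
From mathcomp Require Import all_boot all_order all_algebra.
From mathcomp Require Import mpoly.
Set Implicit Arguments. Unset Strict Implicit. Unset Printing Implicit Defensive.
Import Order.TTheory GRing.Theory.
Local Open Scope ring_scope.

Section Defs.
Variables (n : nat) (K : fieldType).

(* A monomial order on the monomials 'X_{1..n} (exponent vectors):
   a total order, compatible with multiplication (= addition of exponents),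
   with 1 (exponent 0) smallest, and well-founded. *)
Definition monomial_order (le : rel 'X_{1..n}) : Prop :=
  [/\ reflexive le, antisymmetric le, transitive le & total le] /\
  [/\ (forall m1 m2 m, le m1 m2 -> le (m1 + m)%MM (m2 + m)%MM),
      (forall m, le 0%MM m) &
      well_founded (fun m1 m2 => le m1 m2 && (m1 != m2))].

(* in(f): the leading monomial of f (the le-largest monomial of its support);
   for f = 0 it is (arbitrarily) the exponent 0 and is never used. *)
Definition lm (le : rel 'X_{1..n}) (f : {mpoly K[n]}) : 'X_{1..n} :=
  foldl (fun acc m => if le acc m then m else acc) (head 0%MM (msupp f)) (msupp f).

Definition ideal (I : {mpoly K[n]} -> Prop) : Prop :=
  [/\ I 0, (forall f g, I f -> I g -> I (f + g)) &
      (forall r f, I f -> I (r * f))].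

Definition ideal_add (I J : {mpoly K[n]} -> Prop) : {mpoly K[n]} -> Prop :=
  fun h => exists f g, [/\ I f, J g & h = f + g].

Definition ideal_cap (I J : {mpoly K[n]} -> Prop) : {mpoly K[n]} -> Prop :=
  fun h => I h /\ J h.

Definition ideal_eq (I J : {mpoly K[n]} -> Prop) : Prop :=
  forall h, I h <-> J h.

Definition ideal_gen (A : {mpoly K[n]} -> Prop) : {mpoly K[n]} -> Prop :=
  fun p => exists s : seq ({mpoly K[n]} * {mpoly K[n]}),
    (forall x, x \in s -> A x.2) /\ p = \sum_(x <- s) x.1 * x.2.

Definition init_ideal (le : rel 'X_{1..n}) (I : {mpoly K[n]} -> Prop)
  : {mpoly K[n]} -> Prop :=
  ideal_gen (fun p => exists f, [/\ I f, f != 0 & p = 'X_[lm le f]]).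

Definition groebner (le : rel 'X_{1..n}) (I : {mpoly K[n]} -> Prop)
  (G : seq {mpoly K[n]}) : Prop :=
  (forall g, g \in G -> I g /\ g != 0) /\
  ideal_eq (init_ideal le I)
           (ideal_gen (fun p => exists2 g, g \in G & p = 'X_[lm le g])).

End Defs.

(* For an ideal I, call a monomial m a leading monomial of I when m = in(f)
   for some nonzero f in I.  Since in(I) is a monomial ideal generated by
   these monomials, and they are closed under taking multiples, a polynomial
   lies in in(I) iff all monomials of its support are leading monomials of I.
   Each of the six conditions is thereby reduced to one of three statements:
   - (a), (b), (c): every leading monomial of J + E is one of J or of E;
   - (d), (e): every common leading monomial of J and E is one of J /\ E;
   - (f): every nonzero h in J + E splits as f - g with f in J, g in E whose
     leading terms cannot cancel ("separated" decompositions).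
   The first and second statements are each shown equivalent to the third by
   well-founded induction on the leading monomial, repeatedly cancelling the
   leading term.  (b) -> (c) needs the existence of Groebner bases, obtained
   from Dickson's lemma, which is proved first. *)

From HB Require Import structures.
From mathcomp Require Import all_boot all_order all_algebra.
From mathcomp Require Import mpoly.
From Stdlib Require Import Classical.
Set Implicit Arguments. Unset Strict Implicit. Unset Printing Implicit Defensive.
Import GRing.Theory.
Local Open Scope ring_scope.

Section Dickson.

Lemma finite_choice (T U : eqType) (L : seq T) (R : T -> U -> Prop) :
  (forall x, x \in L -> exists y, R x y) ->
  exists L' : seq U, (forall y, y \in L' -> exists2 x, x \in L & R x y) /\
                     (forall x, x \in L -> exists2 y, y \in L' & R x y).
Proof.
elim: L => [|x L IH] Rtotal; first by exists [::].
have [y Rxy] := Rtotal x (mem_head _ _).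
have [|L' [L'R LR']] := IH; first by move=> z zL; apply: Rtotal; rewrite inE zL orbT.
exists (y :: L'); split => [y'|x'].
  rewrite inE => /orP [/eqP ->|/L'R [x'' x''L R']]; first by exists x; rewrite ?mem_head.
  by exists x''; rewrite // inE x''L orbT.
rewrite inE => /orP [/eqP ->|/LR' [y' y'L R']]; first by exists y; rewrite ?mem_head.
by exists y'; rewrite // inE y'L orbT.
Qed.

Lemma all2_leq_trans (s t u : seq nat) : all2 leq s t -> all2 leq t u -> all2 leq s u.
Proof.
elim: s t u => [|x s IH] [|y t] [|z u] //= /andP [xy st] /andP [yz tu].
by rewrite (leq_trans xy yz) (IH _ _ st tu).
Qed.

Definition finite_basis (P : seq nat -> Prop) (L : seq (seq nat)) :=
  (forall l, l \in L -> P l) /\ (forall s, P s -> exists2 l, l \in L & all2 leq l s).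

Lemma basis_bounded_head (P : seq nat -> Prop) :
  (forall i, exists Li, finite_basis (fun t => P (i :: t)) Li) ->
  forall Y, exists L : seq (seq nat), (forall l, l \in L -> P l) /\
    (forall x t, (x <= Y)%N -> P (x :: t) -> exists2 l, l \in L & all2 leq l (x :: t)).
Proof.
move=> slice; elim=> [|Y [L [LP L_basis]]].
  have [L0 [L0P L0_basis]] := slice 0%N.
  exists [seq 0%N :: l | l <- L0]; split; first by move=> l /mapP [l' /L0P ? ->].
  move=> x t; rewrite leqn0 => /eqP -> /L0_basis [l lL ll].
  by exists (0%N :: l); rewrite ?map_f //= leqnn.
have [L1 [L1P L1_basis]] := slice Y.+1.
exists (L ++ [seq Y.+1 :: l | l <- L1]); split.
  by move=> l; rewrite mem_cat => /orP [/LP //|/mapP [l' /L1P ? ->]].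
move=> x t; rewrite leq_eqVlt => /orP [/eqP -> /L1_basis [l lL ll]|].
  by exists (Y.+1 :: l); rewrite ?mem_cat ?map_f ?orbT //= leqnn.
rewrite ltnS => xY /(L_basis _ _ xY) [l lL ll].
by exists l; rewrite ?mem_cat ?lL.
Qed.

(* Dickson's lemma for exponent sequences of a fixed length k, by induction
   on k: the tails of P have a basis LQ by induction; above the largest head
   X needed to realise LQ, an element of P dominates one realising LQ, and
   below X the finitely many slices are handled by [basis_bounded_head]. *)
Lemma dickson_seq k (P : seq nat -> Prop) : (forall s, P s -> size s = k) ->
  exists L, finite_basis P L.
Proof.
elim: k P => [|k IH] P sizeP.
  have nil_of s : P s -> s = [::] by move/sizeP; case: s.
  have [P0|nP0] := classic (P [::]).
    exists [:: [::]]; split => [l|s /nil_of ->]; last by exists [::]; rewrite ?mem_head.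
    by rewrite mem_seq1 => /eqP ->.
  by exists [::]; split => // s Ps; case: nP0; rewrite -(nil_of s Ps).
have [LQ [LQ_tails LQ_basis]] : exists L, finite_basis (fun t => exists x, P (x :: t)) L.
  by apply: IH => t [x /sizeP [->]].
have [X LQ_heads] : exists X, forall l, l \in LQ -> exists2 x, (x <= X)%N & P (x :: l).
  have [LW [_ LW_heads]] := @finite_choice _ nat LQ (fun l x => P (x :: l)) LQ_tails.
  exists (\max_(x <- LW) x)%N => l /LW_heads [x xW Px]; exists x => //.
  exact: (@leq_bigmax_seq _ LW xpredT id x xW isT).
have [|L [LP L_basis]] := @basis_bounded_head P _ X.
  by move=> i; apply: IH => t /sizeP [].
exists L; split => // -[|x t] Ps; first by have := sizeP _ Ps.
have [xX|Xx] := leqP x X; first exact: L_basis.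
have [l lL lt] := LQ_basis t (ex_intro _ x Ps).
have [x' x'X Px'] := LQ_heads l lL.
have [l'' l''L ll] := L_basis _ _ x'X Px'.
exists l'' => //; apply: all2_leq_trans ll _ => /=.
by rewrite lt andbT; apply: leq_trans x'X (ltnW Xx).
Qed.

Definition exps n (m : 'X_{1..n}) : seq nat := tval (multinom_val m).

Lemma lem_exps n (m1 m2 : 'X_{1..n}) : (m1 <= m2)%MM = all2 leq (exps m1) (exps m2).
Proof.
rewrite all2E !size_tuple eqxx /=; apply/mnm_lepP/(all_nthP (0, 0)%N).
  move=> le12 i; rewrite size_zip !size_tuple minnn => ltin.
  rewrite nth_zip ?size_tuple //=.
  by rewrite -(mnm_nth 0%N m1 (Ordinal ltin)) -(mnm_nth 0%N m2 (Ordinal ltin)).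
move=> all12 i; rewrite !(mnm_nth 0%N); have := all12 i.
by rewrite size_zip !size_tuple minnn ltn_ord nth_zip ?size_tuple //; apply.
Qed.

Lemma dickson n (A : 'X_{1..n} -> Prop) :
  exists L : seq 'X_{1..n}, (forall l, l \in L -> A l) /\
    (forall m, A m -> exists2 l, l \in L & (l <= m)%MM).
Proof.
have [L [LA Ldiv]] : exists L, finite_basis (fun s => exists m, A m /\ s = exps m) L.
  by apply: (@dickson_seq n) => s [m [_ ->]]; rewrite size_tuple.
have [LM [LMA LML]] :=
  @finite_choice _ _ L (fun l (m : 'X_{1..n}) => A m /\ l = exps m) LA.
exists LM; split => [l /LMA [x _ []] //|m Am].
have [l lL l_m] := Ldiv (exps m) (ex_intro _ m (conj Am erefl)).
have [m' m'L [_ def_l]] := LML l lL.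
by exists m' => //; rewrite lem_exps -def_l.
Qed.

End Dickson.

Section Ideals.
Variables (n : nat) (K : fieldType).
Implicit Types (I A B : {mpoly K[n]} -> Prop) (f g p q : {mpoly K[n]}).

Lemma ideal0 I : ideal I -> I 0.
Proof. by case. Qed.

Lemma idealD I f g : ideal I -> I f -> I g -> I (f + g).
Proof. by case=> _ + _; apply. Qed.

Lemma idealM I r f : ideal I -> I f -> I (r * f).
Proof. by case=> _ _; apply. Qed.

Lemma idealZ I c f : ideal I -> I f -> I (c *: f).
Proof. by rewrite -mul_mpolyC; apply: idealM. Qed.

Lemma idealN I f : ideal I -> I f -> I (- f).
Proof. by rewrite -scaleN1r; apply: idealZ. Qed.

Lemma idealB I f g : ideal I -> I f -> I g -> I (f - g).
Proof. by move=> hI If Ig; apply: idealD (idealN hI Ig). Qed.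

Lemma ideal_add_ideal A B : ideal A -> ideal B -> ideal (ideal_add A B).
Proof.
move=> hA hB; split.
- by exists 0, 0; rewrite addr0; split => //; apply: ideal0.
- move=> f g [a [b [Aa Bb ->]]] [c [d [Ac Bd ->]]].
  by exists (a + c), (b + d); rewrite addrACA; split => //; apply: idealD.
- move=> r f [a [b [Aa Bb ->]]].
  by exists (r * a), (r * b); rewrite mulrDr; split => //; apply: idealM.
Qed.

Lemma ideal_cap_ideal A B : ideal A -> ideal B -> ideal (ideal_cap A B).
Proof.
move=> hA hB; split.
- by split => //; apply: ideal0.
- by move=> f g [Af Bf] [Ag Bg]; split => //; apply: idealD.
- by move=> r f [Af Bf]; split; apply: idealM.
Qed.

Lemma ideal_addl A B f : ideal B -> A f -> ideal_add A B f.
Proof. by move=> hB Af; exists f, 0; rewrite addr0; split => //; apply: ideal0. Qed.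

Lemma ideal_addr A B g : ideal A -> B g -> ideal_add A B g.
Proof. by move=> hA Bg; exists 0, g; rewrite add0r; split => //; apply: ideal0. Qed.

Lemma ideal_gen_ideal A : ideal (ideal_gen A).
Proof.
split; first by exists [::]; rewrite big_nil.
- move=> f g [s1 [s1A ->]] [s2 [s2A ->]]; exists (s1 ++ s2); rewrite big_cat.
  by split => // x; rewrite mem_cat => /orP [/s1A|/s2A].
- move=> r f [s [sA ->]]; exists [seq (r * x.1, x.2) | x <- s]; split.
    by move=> x /mapP [y ys ->] /=; apply: sA.
  by rewrite big_map mulr_sumr; apply: eq_bigr => x _; rewrite mulrA.
Qed.

Lemma ideal_gen_of A p : A p -> ideal_gen A p.
Proof.
move=> Ap; exists [:: (1, p)]; rewrite big_seq1 mul1r.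
by split => // x; rewrite mem_seq1 => /eqP ->.
Qed.

Lemma mpoly_terms_ind (P : {mpoly K[n]} -> Prop) p : P 0 ->
  (forall a b, P a -> P b -> P (a + b)) ->
  (forall m, m \in msupp p -> P (p@_m *: 'X_[m])) -> P p.
Proof. by move=> P0 PD Pm; rewrite [p]mpolyE big_seq; apply: big_ind. Qed.

Definition monomial_gens A (D : 'X_{1..n} -> Prop) :=
  forall q, A q <-> exists2 u, D u & q = 'X_[u].

Definition divisible (D : 'X_{1..n} -> Prop) m := exists2 u, D u & (u <= m)%MM.

Lemma monomial_idealP A D p : monomial_gens A D ->
  ideal_gen A p <-> forall m, m \in msupp p -> divisible D m.
Proof.
move=> gensA; split.
  move=> [s [sA ->]]; rewrite big_seq.
  apply: (big_ind (fun q => forall m, m \in msupp q -> divisible D m)).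
  - by move=> m; rewrite msupp0.
  - by move=> a b Ha Hb m /msuppD_le; rewrite mem_cat => /orP [/Ha|/Hb].
  case=> r q /sA /gensA [u Du ->] m.
  rewrite (perm_mem (msuppMX _ _)) => /mapP [m' _ ->].
  by exists u => //; apply: lem_addr.
move=> divp; apply: (mpoly_terms_ind (P := ideal_gen A)) => [||m /divp [u Du um]].
- exact: ideal0 (ideal_gen_ideal A).
- by move=> a b; apply: idealD (ideal_gen_ideal A).
rewrite -(submK um) mpolyXD -mul_mpolyC mulrA; apply: idealM (ideal_gen_ideal A) _.
by apply: ideal_gen_of; apply/gensA; exists u.
Qed.

Lemma monomial_ideal_X A D m : monomial_gens A D ->
  ideal_gen A 'X_[m] <-> divisible D m.
Proof.
move=> gensA; rewrite (monomial_idealP _ gensA) msuppX.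
by split => [|Dm m']; [apply; rewrite mem_seq1 | rewrite mem_seq1 => /eqP ->].
Qed.

Lemma monomial_ideal_addP A1 D1 A2 D2 p : monomial_gens A1 D1 -> monomial_gens A2 D2 ->
  ideal_add (ideal_gen A1) (ideal_gen A2) p <->
  forall m, m \in msupp p -> divisible D1 m \/ divisible D2 m.
Proof.
move=> gens1 gens2; split.
  move=> [a [b [Ha Hb ->]]] m /msuppD_le; rewrite mem_cat => /orP [ma|mb].
    by left; move/(monomial_idealP _ gens1): Ha; apply.
  by right; move/(monomial_idealP _ gens2): Hb; apply.
have hadd := ideal_add_ideal (ideal_gen_ideal A1) (ideal_gen_ideal A2).
move=> divp; apply: (mpoly_terms_ind (P := ideal_add (ideal_gen A1) (ideal_gen A2))).
- exact: ideal0 hadd.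
- by move=> a b; apply: idealD hadd.
move=> m /divp [D1m|D2m].
- apply: ideal_addl; first exact: ideal_gen_ideal.
  by apply: idealZ; [exact: ideal_gen_ideal | exact/(monomial_ideal_X _ gens1)].
- apply: ideal_addr; first exact: ideal_gen_ideal.
  by apply: idealZ; [exact: ideal_gen_ideal | exact/(monomial_ideal_X _ gens2)].
Qed.

End Ideals.

Section LeadingMonomial.
Variables (n : nat) (K : fieldType) (le : rel 'X_{1..n}).
Hypothesis mo : monomial_order le.
Implicit Types (f g h p : {mpoly K[n]}) (u v w : 'X_{1..n}).
Local Notation lm := (lm le).

Let ord_refl u : le u u. Proof. by case: mo => [[refl _ _ _] _]. Qed.
Let ord_anti u v : le u v -> le v u -> u = v.
Proof. by case: mo => [[_ anti _ _] _] uv vu; apply: anti; rewrite uv. Qed.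
Let ord_trans v u w : le u v -> le v w -> le u w.
Proof. by case: mo => [[_ _ trans _] _]; apply: trans. Qed.
Let ord_total u v : le u v || le v u. Proof. by case: mo => [[_ _ _ total] _]. Qed.
Let ord_addr u v w : le u v -> le (w + u)%MM (w + v)%MM.
Proof. by case: mo => _ [addr _ _] uv; rewrite addmC [(w + v)%MM]addmC; apply: addr. Qed.

Definition ltm u v := le u v && (u != v).

Lemma ltm_wf : well_founded ltm.
Proof. by case: mo => _ []. Qed.

Lemma le_ltm_trans u v w : le u v -> ltm v w -> ltm u w.
Proof.
move=> uv /andP [vw neq]; rewrite /ltm (ord_trans uv vw); apply/eqP => uw.
by move: neq; rewrite -uw in vw *; rewrite (ord_anti vw uv) eqxx.
Qed.

Let pick_max := fun acc m => if le acc m then m else acc.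

Let pick_max_mem a s : foldl pick_max a s \in a :: s.
Proof.
elim: s a => [|y s IH] a /=; first by rewrite mem_seq1.
have := IH (pick_max a y); rewrite /pick_max.
by case: ifP; rewrite !inE => _ /orP [->|->]; rewrite ?orbT.
Qed.

Let pick_max_ub a s m : m \in a :: s -> le m (foldl pick_max a s).
Proof.
elim: s a m => [|y s IH] a m /=; first by rewrite mem_seq1 => /eqP ->.
have [le_a le_y] : le a (pick_max a y) /\ le y (pick_max a y).
  rewrite /pick_max; case: ifP => // nay.
  by split => //; case/orP: (ord_total a y); rewrite ?nay.
rewrite !inE => /or3P [/eqP ->|/eqP ->|ms].
- by apply: ord_trans le_a _; apply: IH; rewrite mem_head.
- by apply: ord_trans le_y _; apply: IH; rewrite mem_head.
- by apply: IH; rewrite inE ms orbT.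
Qed.

Lemma lm_msupp f : f != 0 -> lm f \in msupp f.
Proof.
rewrite /lm; case E: (msupp f) => [|a s]; first by rewrite (msuppnil0 E) eqxx.
by move=> _; have := pick_max_mem a (a :: s); rewrite /= inE => /orP [/eqP ->|];
  rewrite ?mem_head.
Qed.

Lemma le_lm f m : m \in msupp f -> le m (lm f).
Proof.
rewrite /lm; case: (msupp f) => [|a s] // ms.
by apply: (@pick_max_ub a (a :: s)); rewrite inE ms orbT.
Qed.

Lemma lm_eq f u : u \in msupp f -> (forall m, m \in msupp f -> le m u) -> lm f = u.
Proof.
move=> uf ub; have nzf : f != 0 by apply: contraTneq uf => ->; rewrite msupp0.
exact: ord_anti (ub _ (lm_msupp nzf)) (le_lm uf).
Qed.

Lemma lm_coef_neq0 f : f != 0 -> f@_(lm f) != 0.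
Proof. by rewrite -mcoeff_msupp; apply: lm_msupp. Qed.

Lemma lmZ c f : c != 0 -> lm (c *: f) = lm f.
Proof.
move=> nzc; have suppZ m : (m \in msupp (c *: f)) = (m \in msupp f).
  by rewrite !mcoeff_msupp mcoeffZ mulf_eq0 negb_or nzc.
have [->|nzf] := eqVneq f 0; first by rewrite scaler0.
by apply: lm_eq => [|m]; rewrite suppZ; [apply: lm_msupp | apply: le_lm].
Qed.

Lemma lmN f : lm (- f) = lm f.
Proof. by rewrite -scaleN1r lmZ // oppr_eq0 oner_eq0. Qed.

Lemma lmMX f u : f != 0 -> f * 'X_[u] != 0 /\ lm (f * 'X_[u]) = (u + lm f)%MM.
Proof.
move=> nzf; have inM : (u + lm f)%MM \in msupp (f * 'X_[u]).
  by rewrite mcoeff_msupp mcoeffMX lm_coef_neq0.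
split; first by apply: contraTneq inM => ->; rewrite msupp0.
apply: lm_eq => // m; rewrite (perm_mem (msuppMX _ _)) => /mapP [m' m'f ->].
exact/ord_addr/le_lm.
Qed.

Lemma lm_add_lower f g : f != 0 -> (g = 0 \/ ltm (lm g) (lm f)) ->
  f + g != 0 /\ lm (f + g) = lm f.
Proof.
move=> nzf [->|/andP [le_gf neq]]; first by rewrite addr0.
have g0 : g@_(lm f) = 0.
  apply: memN_msupp_eq0; apply: contra neq => /le_lm le_fg.
  by rewrite (ord_anti le_gf le_fg).
have inS : lm f \in msupp (f + g).
  by rewrite mcoeff_msupp mcoeffD g0 addr0 lm_coef_neq0.
split; first by apply: contraTneq inS => ->; rewrite msupp0.
apply: lm_eq => // m /msuppD_le; rewrite mem_cat => /orP [/le_lm //|/le_lm le_mg].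
exact: ord_trans le_mg le_gf.
Qed.

Lemma lm_sub_cancel f g : f != 0 -> lm g = lm f -> g@_(lm f) = f@_(lm f) ->
  f - g != 0 -> ltm (lm (f - g)) (lm f).
Proof.
move=> nzf lmg coef nz; apply/andP; split.
  move: (lm_msupp nz) => /msuppB_le; rewrite mem_cat.
  by case/orP => /le_lm; rewrite ?lmg.
apply: contraTneq (lm_msupp nz) => ->.
by rewrite mcoeff_msupp mcoeffB coef subrr eqxx.
Qed.

Lemma lm_sub_distinct f g : f != 0 -> g != 0 -> lm f != lm g ->
  f - g != 0 /\ (lm (f - g) = lm f /\ ltm (lm g) (lm f) \/
                 lm (f - g) = lm g /\ ltm (lm f) (lm g)).
Proof.
move=> nzf nzg neq; case/orP: (ord_total (lm g) (lm f)) => [le_gf|le_fg].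
  have lt_gf : ltm (lm (- g)) (lm f) by rewrite lmN /ltm le_gf eq_sym.
  have [nz ->] := lm_add_lower nzf (or_intror lt_gf).
  by rewrite lmN in lt_gf; split => //; left.
have lt_fg : ltm (lm f) (lm (- g)) by rewrite lmN /ltm le_fg.
have nzNg : - g != 0 by rewrite oppr_eq0.
have [nz e] := lm_add_lower nzNg (or_intror lt_fg).
by rewrite addrC in nz e; rewrite lmN in e lt_fg; split => //; right.
Qed.

Definition lead_separated f g :=
  (f = 0 \/ g = 0) \/ [/\ f != 0, g != 0 & lm f != lm g].

Lemma lead_separatedP f g : lead_separated f g \/ [/\ f != 0, g != 0 & lm f = lm g].
Proof.
rewrite /lead_separated; have [->|nzf] := eqVneq f 0; first by do 3!left.
have [->|nzg] := eqVneq g 0; first by left; left; right.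
by have [eq_fg|neq] := eqVneq (lm f) (lm g); [right | left; right]; split.
Qed.

Lemma lead_separated_sym f g : lead_separated f g -> lead_separated g f.
Proof.
rewrite /lead_separated => -[[f0|g0]|[nzf nzg neq]]; [left; right|left; left|right] => //.
by split; rewrite // eq_sym.
Qed.

Lemma lm_sub_separated f g : lead_separated f g -> f - g != 0 ->
  [/\ f != 0 -> le (lm f) (lm (f - g)), g != 0 -> le (lm g) (lm (f - g)) &
      (f != 0 /\ lm (f - g) = lm f) \/ (g != 0 /\ lm (f - g) = lm g)].
Proof.
case=> [[->|->]|[nzf nzg neq]] nz.
- rewrite sub0r oppr_eq0 in nz *; rewrite lmN.
  by split=> [|_|]; [rewrite eqxx | apply: ord_refl | right].
- rewrite subr0 in nz *.
  by split=> [_||]; [apply: ord_refl | rewrite eqxx | left].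
have [_ [[-> /andP [le_gf _]]|[-> /andP [le_fg _]]]] := lm_sub_distinct nzf nzg neq.
  by split=> [_|_|]; [apply: ord_refl | exact: le_gf | left].
by split=> [_|_|]; [exact: le_fg | apply: ord_refl | right].
Qed.

End LeadingMonomial.

Section InitialIdeal.
Variables (n : nat) (K : fieldType) (le : rel 'X_{1..n}).
Hypothesis mo : monomial_order le.
Implicit Types (I : {mpoly K[n]} -> Prop) (G : seq {mpoly K[n]}) (f g p : {mpoly K[n]}).
Local Notation lm := (lm le).

Definition lead_mon I m := exists f, [/\ I f, f != 0 & lm f = m].

Definition lead_mons_of G u := exists2 g, g \in G & u = lm g.

Lemma init_gens I : monomial_gens (fun p => exists f, [/\ I f, f != 0 & p = 'X_[lm f]])
  (lead_mon I).
Proof.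
move=> q; split; first by move=> [f [If nzf ->]]; exists (lm f) => //; exists f.
by move=> [_ [f [If nzf <-]] ->]; exists f.
Qed.

Lemma groebner_gens G : monomial_gens (fun p => exists2 g, g \in G & p = 'X_[lm g])
  (lead_mons_of G).
Proof.
move=> q; split; first by move=> [g gG ->]; exists (lm g) => //; exists g.
by move=> [_ [g gG ->] ->]; exists g.
Qed.

Lemma lead_mon_mul I u m : ideal I -> lead_mon I u -> (u <= m)%MM -> lead_mon I m.
Proof.
move=> hI [f [If nzf <-]] um; have [nzfX lmfX] := lmMX mo (m - lm f)%MM nzf.
exists (f * 'X_[m - lm f]); split => //; first by rewrite mulrC; apply: idealM.
by rewrite lmfX submK.
Qed.

Lemma divisible_lead_mon I m : ideal I -> divisible (lead_mon I) m <-> lead_mon I m.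
Proof.
move=> hI; split => [[u Iu um]|Im]; first exact: lead_mon_mul Iu um.
by exists m => //; apply: lepm_refl.
Qed.

Lemma lead_mon_sub I1 I2 m : (forall f, I1 f -> I2 f) -> lead_mon I1 m -> lead_mon I2 m.
Proof. by move=> sub12 [f [If nzf lmf]]; exists f; split => //; apply: sub12. Qed.

Lemma lead_mon_addl I1 I2 m : ideal I2 -> lead_mon I1 m -> lead_mon (ideal_add I1 I2) m.
Proof. by move=> hI2; apply: lead_mon_sub => f; apply: ideal_addl. Qed.

Lemma lead_mon_addr I1 I2 m : ideal I1 -> lead_mon I2 m -> lead_mon (ideal_add I1 I2) m.
Proof. by move=> hI1; apply: lead_mon_sub => f; apply: ideal_addr. Qed.

Lemma init_idealP I p : ideal I ->
  init_ideal le I p <-> forall m, m \in msupp p -> lead_mon I m.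
Proof.
move=> hI; rewrite /init_ideal (monomial_idealP _ (init_gens I)).
by split => supp m /supp /(divisible_lead_mon _ hI).
Qed.

Lemma init_ideal_X I m : ideal I -> init_ideal le I 'X_[m] <-> lead_mon I m.
Proof.
move=> hI; rewrite /init_ideal (monomial_ideal_X _ (init_gens I)).
exact: divisible_lead_mon.
Qed.

Lemma groebnerP I G : ideal I ->
  groebner le I G <-> (forall g, g \in G -> I g /\ g != 0) /\
                      (forall m, lead_mon I m <-> divisible (lead_mons_of G) m).
Proof.
move=> hI; split => -[memG eqI]; split => //.
  move=> m; rewrite -(init_ideal_X _ hI) -(monomial_ideal_X _ (groebner_gens G)).
  exact: eqI.
move=> p; rewrite (init_idealP _ hI) (monomial_idealP _ (groebner_gens G)).
by split => supp m /supp /eqI.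
Qed.

Lemma lead_match I f : ideal I -> lead_mon I (lm f) -> f != 0 ->
  exists g, [/\ I g, g != 0, lm g = lm f & g@_(lm f) = f@_(lm f)].
Proof.
move=> hI [g [Ig nzg lmg]] nzf.
have gc : g@_(lm f) != 0 by rewrite -lmg lm_coef_neq0.
have nzc : f@_(lm f) / g@_(lm f) != 0 by rewrite mulf_neq0 ?invr_eq0 ?lm_coef_neq0.
exists ((f@_(lm f) / g@_(lm f)) *: g); split.
- exact: idealZ.
- by rewrite scaler_eq0 negb_or nzc.
- by rewrite lmZ.
- by rewrite mcoeffZ -mulrA mulVf ?mulr1.
Qed.

(* Every ideal has a Groebner basis: realise a Dickson basis of its leading
   monomials by elements of the ideal. *)
Lemma groebner_exists I : ideal I -> exists G, groebner le I G.
Proof.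
move=> hI; have [L [LI Ldiv]] := dickson (lead_mon I).
have [G [GL LG]] := @finite_choice _ _ L (fun u g => [/\ I g, g != 0 & lm g = u]) LI.
exists G; apply/(groebnerP _ hI); split => [g /GL [u _ []] //|m]; split.
  move=> /Ldiv [l lL l_m]; have [g gG [_ _ lmg]] := LG l lL.
  by exists l => //; exists g.
move=> [_ [g /GL [u _ [Ig nzg _]] ->] um].
by apply: lead_mon_mul um; last exists g.
Qed.

End InitialIdeal.

Section SeparatedDecompositions.
Variables (n : nat) (K : fieldType) (le : rel 'X_{1..n}).
Hypothesis mo : monomial_order le.
Implicit Types (A B : {mpoly K[n]} -> Prop) (f g h : {mpoly K[n]}).
Local Notation lm := (lm le).
Local Notation lead_separated := (lead_separated le).

Definition sep_dec A B h := exists f g, [/\ A f, B g, h = f - g & lead_separated f g].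

Lemma sep_dec_swap A B h : sep_dec A B h -> sep_dec B A (- h).
Proof.
move=> [f [g [Af Bg -> sep]]]; exists g, f; split => //; first by rewrite opprB.
exact: lead_separated_sym.
Qed.

(* One reduction step: if f1 in A has the leading term of h, a separated
   decomposition of h - f1 lifts to one of h, since everything in it lies
   strictly below lm h = lm f1. *)
Lemma sep_dec_lift A B h f1 : ideal A -> ideal B -> h != 0 -> A f1 -> f1 != 0 ->
  lm f1 = lm h -> f1@_(lm h) = h@_(lm h) ->
  (h - f1 != 0 -> sep_dec A B (h - f1)) -> sep_dec A B h.
Proof.
move=> hA hB nzh Af1 nzf1 lmf1 coef decr.
have [r0|nzr] := eqVneq (h - f1) 0.
  exists f1, 0; split => //; first exact: ideal0.
    by rewrite subr0; apply/eqP; rewrite -subr_eq0 r0.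
  by left; right.
have lt_r := lm_sub_cancel mo nzh lmf1 coef nzr.
have [f2 [g2 [Af2 Bg2 def_r sep2]]] := decr nzr.
have := lm_sub_separated mo sep2; rewrite -def_r => /(_ nzr) [le_f2 le_g2 _].
have [nzf lmf] : f1 + f2 != 0 /\ lm (f1 + f2) = lm f1.
  apply: (lm_add_lower mo nzf1); have [->|nzf2] := eqVneq f2 0; first by left.
  by right; rewrite lmf1; apply: (le_ltm_trans mo (le_f2 nzf2)).
exists (f1 + f2), g2; split => //; first exact: idealD.
  by rewrite -addrA -def_r addrC subrK.
have [->|nzg2] := eqVneq g2 0; first by left; right.
right; split => //; rewrite lmf lmf1 eq_sym.
by have /andP [] := le_ltm_trans mo (le_g2 nzg2) lt_r.
Qed.

End SeparatedDecompositions.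

Section Equivalences.
Variables (n : nat) (K : fieldType) (le : rel 'X_{1..n}).
Hypothesis mo : monomial_order le.
Variables (J E : {mpoly K[n]} -> Prop).
Hypotheses (hJ : ideal J) (hE : ideal E).
Implicit Types (f g h : {mpoly K[n]}) (m u : 'X_{1..n}).
Local Notation lm := (lm le).
Local Notation ltm := (ltm le).
Local Notation lead_mon := (lead_mon le).
Local Notation sep_dec := (sep_dec le).

Let hJE : ideal (ideal_add J E). Proof. exact: ideal_add_ideal. Qed.
Let hJcapE : ideal (ideal_cap J E). Proof. exact: ideal_cap_ideal. Qed.

Definition leads_split :=
  forall m, lead_mon (ideal_add J E) m -> lead_mon J m \/ lead_mon E m.

Definition leads_meet :=
  forall m, lead_mon J m -> lead_mon E m -> lead_mon (ideal_cap J E) m.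

Definition sep_decomposable := forall h, ideal_add J E h -> h != 0 -> sep_dec J E h.

(* (a) restated: compare both sides monomial by monomial. *)
Lemma init_add_split : ideal_eq (init_ideal le (ideal_add J E))
  (ideal_add (init_ideal le J) (init_ideal le E)) <-> leads_split.
Proof.
have addP p := monomial_ideal_addP p (init_gens le J) (init_gens le E).
have divJ m := divisible_lead_mon mo m hJ; have divE m := divisible_lead_mon mo m hE.
split => [eq_init m|split_JE p].
  move/(init_ideal_X mo _ hJE)/eq_init/addP/(_ m); rewrite msuppX mem_seq1 eqxx.
  by case=> // [/divJ|/divE]; [left|right].
rewrite (init_idealP mo _ hJE) addP; split => supp m /supp.
  by case/split_JE => [/divJ|/divE]; [left|right].
by case=> [/divJ|/divE]; [apply: lead_mon_addl | apply: lead_mon_addr].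
Qed.

(* (d) restated, likewise. *)
Lemma init_cap_meet : ideal_eq (init_ideal le (ideal_cap J E))
  (ideal_cap (init_ideal le J) (init_ideal le E)) <-> leads_meet.
Proof.
split => [eq_init m Jm Em|meet p].
  apply/(init_ideal_X mo _ hJcapE)/eq_init.
  by split; apply/(init_ideal_X mo); rewrite ?Jm ?Em.
rewrite (init_idealP mo _ hJcapE) /ideal_cap (init_idealP mo _ hJ) (init_idealP mo _ hE).
split => [supp|[suppJ suppE] m mp]; last by apply: meet; [apply: suppJ | apply: suppE].
by split=> m /supp; apply: lead_mon_sub => f [].
Qed.

(* (e) restated: lcm(in f, in g) is a common leading monomial of J and E,
   and conversely a common leading monomial m is lcm(m, m). *)
Lemma lcm_meet : (forall f g, J f -> f != 0 -> E g -> g != 0 ->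
    exists h, [/\ ideal_cap J E h, h != 0 & lm h = mlcm (lm f) (lm g)]) <-> leads_meet.
Proof.
split => [lcm m [f [Jf nzf <-]] [g [Eg nzg lmg]]|meet f g Jf nzf Eg nzg].
  have [h [JEh nzh lmh]] := lcm f g Jf nzf Eg nzg.
  by exists h; split => //; rewrite lmh lmg; apply/mnmP => i; rewrite mnmE maxnn.
apply: meet.
  by apply: (lead_mon_mul mo hJ (u := lm f)); [exists f | exact: lem_mlcml].
by apply: (lead_mon_mul mo hE (u := lm g)); [exists g | exact: lem_mlcmr].
Qed.

(* (a) -> (b): the leading monomials of GJ ++ GE then divide exactly those
   of J + E. *)
Lemma split_groebner : leads_split -> forall GJ GE, groebner le J GJ ->
  groebner le E GE -> groebner le (ideal_add J E) (GJ ++ GE).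
Proof.
move=> split_JE GJ GE /(groebnerP mo _ hJ) [GJJ leadJ] /(groebnerP mo _ hE) [GEE leadE].
apply/(groebnerP mo _ hJE); split => [g|m].
  rewrite mem_cat => /orP [/GJJ|/GEE] [Ig nzg]; split => //.
    exact: ideal_addl.
  exact: ideal_addr.
split.
  case/split_JE => [/leadJ|/leadE] [u [g gG ->] um]; exists (lm g) => //.
    by exists g; rewrite // mem_cat gG.
  by exists g; rewrite // mem_cat gG orbT.
move=> [u [g]]; rewrite mem_cat => /orP [gG|gG] -> um.
  by apply: lead_mon_addl => //; apply/leadJ; exists (lm g) => //; exists g.
by apply: lead_mon_addr => //; apply/leadE; exists (lm g) => //; exists g.
Qed.

(* (c) -> (a): a leading monomial of J + E is divisible by that of some
   g in GJ or GE, hence is a leading monomial of J or of E. *)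
Lemma groebner_split : (exists GJ GE, [/\ groebner le J GJ, groebner le E GE &
  groebner le (ideal_add J E) (GJ ++ GE)]) -> leads_split.
Proof.
move=> [GJ [GE [/(groebnerP mo _ hJ) [_ leadJ] /(groebnerP mo _ hE) [_ leadE]
  /(groebnerP mo _ hJE) [_ leadJE]]]] m /leadJE [u [g]].
rewrite mem_cat => /orP [gG|gG] -> um; [left; apply/leadJ | right; apply/leadE];
  by exists (lm g) => //; exists g.
Qed.

(* Induction on lm h: cancel the leading term of h against an element of J
   or of E with the same leading term, and lift the decomposition of the
   remainder (for E, after exchanging the roles of J and E). *)
Lemma split_sep : leads_split -> sep_decomposable.
Proof.
move=> split_JE h JEh nzh; move: {2}(lm h) (erefl (lm h)) => u lmh.
elim/(well_founded_ind (ltm_wf mo)): u h JEh nzh lmh => u IH h JEh nzh lmh.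
have lower r : ideal_add J E r -> r != 0 -> ltm (lm r) u -> sep_dec J E r.
  by move=> JEr nzr lt_r; apply: IH lt_r _ JEr nzr erefl.
have [Ju|Eu] := split_JE u (ex_intro _ h (And3 JEh nzh lmh)).
  rewrite -lmh in Ju; have [f1 [Jf1 nzf1 lmf1 coef]] := lead_match mo hJ Ju nzh.
  apply: (sep_dec_lift mo hJ hE nzh Jf1 nzf1 lmf1 coef) => nzr.
  apply: (lower _ _ nzr); first exact: idealB hJE JEh (ideal_addl hE Jf1).
  by rewrite -lmh; apply: (lm_sub_cancel mo).
have nzNh : - h != 0 by rewrite oppr_eq0.
rewrite -lmh -(lmN mo h) in Eu.
have [g1 [Eg1 nzg1 lmg1 coef]] := lead_match mo hE Eu nzNh.
rewrite -[h]opprK; apply: sep_dec_swap.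
apply: (sep_dec_lift mo hE hJ nzNh Eg1 nzg1 lmg1 coef) => nzr.
have lt_r := lm_sub_cancel mo nzNh lmg1 coef nzr.
rewrite -opprD; apply: sep_dec_swap; apply: lower.
- exact: idealD hJE JEh (ideal_addr hJ Eg1).
- by rewrite -oppr_eq0 opprD.
- by rewrite -lmh -(lmN mo h) -(lmN mo (h + g1)) opprD.
Qed.

(* (f) -> (a): the leading monomial of h = f - g is that of f or of g. *)
Lemma sep_split : sep_decomposable -> leads_split.
Proof.
move=> sep m [h [JEh nzh <-]]; have [f [g [Jf Eg def_h sepfg]]] := sep h JEh nzh.
have := lm_sub_separated mo sepfg; rewrite -def_h.
move=> /(_ nzh) [_ _ [[nzf ->]|[nzg ->]]].
  by left; exists f.
by right; exists g.
Qed.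

(* The heart of (d) -> (f): f - g with f in J, g in E of the same leading
   monomial u is decomposable, by induction on u: subtracting from both an
   element of J /\ E with the leading term of f either separates them or
   lowers their common leading monomial. *)
Lemma sep_dec_equal_leads : leads_meet -> forall u f g, J f -> E g -> f != 0 ->
  g != 0 -> lm f = u -> lm g = u -> sep_dec J E (f - g).
Proof.
move=> meet; elim/(well_founded_ind (ltm_wf mo)) => u IH f g Jf Eg nzf nzg lmf lmg.
have JEf : lead_mon (ideal_cap J E) (lm f).
  by apply: meet; [exists f | exists g; rewrite lmf lmg].
have [k [[Jk Ek] nzk lmk coef]] := lead_match mo hJcapE JEf nzf.
have -> : f - g = (f - k) - (g - k) by rewrite opprB addrA subrK.
have [sep|[nzf' nzg' eq_lm]] := lead_separatedP le (f - k) (g - k).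
  by exists (f - k), (g - k); split => //; apply: idealB.
apply: (IH (lm (f - k))) => //; try exact: idealB.
by rewrite -lmf; apply: (lm_sub_cancel mo).
Qed.

(* (d) -> (f): write h = f - g; unless already separated, f and g have the
   same leading monomial. *)
Lemma meet_sep : leads_meet -> sep_decomposable.
Proof.
move=> meet _ [f [g0 [Jf Eg0 ->]]] _; rewrite -[g0]opprK.
have Eg : E (- g0) by apply: idealN.
have [sep|[nzf nzg lmfg]] := lead_separatedP le f (- g0).
  by exists f, (- g0); split.
exact: sep_dec_equal_leads meet _ _ _ Jf Eg nzf nzg lmfg erefl.
Qed.

(* (f) -> (d): cancel the common leading term of f in J and g1 in E; the
   separated decomposition f2 - g2 of f - g1 stays below it, so
   f - f2 = g1 - g2 lies in J /\ E with leading monomial lm f. *)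
Lemma sep_meet : sep_decomposable -> leads_meet.
Proof.
move=> sep m [f [Jf nzf <-]] Em.
have [g1 [Eg1 nzg1 lmg1 coef]] := lead_match mo hE Em nzf.
have [r0|nzr] := eqVneq (f - g1) 0.
  by exists f; split => //; split => //; move/eqP: r0; rewrite subr_eq0 => /eqP ->.
have lt_r := lm_sub_cancel mo nzf lmg1 coef nzr.
have JEr : ideal_add J E (f - g1).
  by apply: idealB hJE (ideal_addl hE Jf) (ideal_addr hJ Eg1).
have [f2 [g2 [Jf2 Eg2 def_r sep2]]] := sep _ JEr nzr.
have := lm_sub_separated mo sep2; rewrite -def_r => /(_ nzr) [le_f2 _ _].
have [nzk lmk] : f - f2 != 0 /\ lm (f - f2) = lm f.
  apply: (lm_add_lower mo nzf).
  have [->|nzf2] := eqVneq f2 0; first by left; rewrite oppr0.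
  by right; rewrite (lmN mo); apply: (le_ltm_trans mo (le_f2 nzf2)).
exists (f - f2); split => //; split; first exact: idealB.
have -> : f - f2 = g1 - g2.
  by rewrite -[f](subrK g1) def_r addrAC [f2 - g2 - f2]addrAC subrr add0r addrC.
exact: idealB.
Qed.

End Equivalences.

Unset Implicit Arguments.

Theorem theorem1p1 (n : nat) (K : fieldType) (le : rel 'X_{1..n})
  (J E : {mpoly K[n]} -> Prop) :
  monomial_order le -> ideal J -> ideal E ->
  [<->
    (* (a) *)
    ideal_eq (init_ideal le (ideal_add J E))
             (ideal_add (init_ideal le J) (init_ideal le E));
    (* (b) *)
    (forall GJ GE, groebner le J GJ -> groebner le E GE ->
       groebner le (ideal_add J E) (GJ ++ GE));
    (* (c) *)
    (exists GJ GE, [/\ groebner le J GJ, groebner le E GE &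
       groebner le (ideal_add J E) (GJ ++ GE)]);
    (* (d) *)
    ideal_eq (init_ideal le (ideal_cap J E))
             (ideal_cap (init_ideal le J) (init_ideal le E));
    (* (e) *)
    (forall f g, J f -> f != 0 -> E g -> g != 0 ->
       exists h, [/\ ideal_cap J E h, h != 0 &
                     lm le h = mlcm (lm le f) (lm le g)]);
    (* (f) *)
    (forall h, ideal_add J E h -> h != 0 ->
       exists f g, [/\ J f, E g, h = f - g &
         (f = 0 \/ g = 0) \/ [/\ f != 0, g != 0 & lm le f != lm le g]])].
Proof.
move=> mo hJ hE.
have a_split := init_add_split mo hJ hE.
have d_meet := init_cap_meet mo hJ hE.
have e_meet := lcm_meet mo hJ hE.
tfae.
- by move/a_split; apply: split_groebner.
- move=> all_gb; have [GJ gbJ] := groebner_exists mo hJ.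
  have [GE gbE] := groebner_exists mo hE.
  by exists GJ, GE; split => //; apply: all_gb.
- by move/(groebner_split mo hJ hE)/(split_sep mo hJ hE)/(sep_meet mo hJ hE)/d_meet.
- by move/d_meet/e_meet.
- by move/e_meet/(meet_sep mo hJ hE).
- by move/(sep_split mo)/a_split.
Qed.
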